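(* Let $d\ge 2$ be even and fix a base $\theta>1$. Let $(u_j)_{j\ge 1}$ be a real sequence and let ${\bm v}\in\mathbb{R}^d$ with $\|{\bm v}\|_2=1$. For each $n\ge 1$ let $\boldsymbol{X}_n=\boldsymbol{u}_n{\bm v}^\top\in\mathbb{R}^{n\times d}$ with $\boldsymbol{u}_n=(u_1,\dots,u_n)^\top$. Assume: (i) there exist constants $0<c\le C<\infty$ with $c\le |u_j|\le C$ for all $j$; (ii) $\sum_{j=1}^{n-1}|u_{j+1}^2-u_j^2| = o(n)$ as $n\to\infty$; (iii) $e^{2i\theta_k}\neq 1$ for all $1\le k\le d/2$, and $e^{i(\theta_k+\theta_l)}\neq 1$, $e^{i(\theta_k-\theta_l)}\neq 1$ for all $k\neq l$. Then $$\lim_{n\to\infty}\frac{\mathrm{srank}(\mathcal{R}(\boldsymbol{X}_n))}{\mathrm{srank}(\boldsymbol{X}_n)}=\frac{2}{\max_{1\le k\le d/2}\alpha_k^2}\in[2,d],$$ where $\alpha_k:=\sqrt{v_{2k-1}^2+v_{2k}^2}$.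
   Context: RoPE action: for $\boldsymbol{X}=[\boldsymbol{x}_1,\dots,\boldsymbol{x}_n]^\top\in\mathbb{R}^{n\times d}$ ($d$ even), $\mathcal{R}(\boldsymbol{X}):=[\boldsymbol{R}_1\boldsymbol{x}_1,\dots,\boldsymbol{R}_n\boldsymbol{x}_n]^\top$, where $\boldsymbol{R}_j=\mathrm{Diag}(\boldsymbol{R}_{j,\theta_1},\dots,\boldsymbol{R}_{j,\theta_{d/2}})\in\mathbb{R}^{d\times d}$ is block diagonal with $2\times2$ blocks $\boldsymbol{R}_{j,\theta_k}=\begin{bmatrix}\cos(j\theta_k)&-\sin(j\theta_k)\\ \sin(j\theta_k)&\cos(j\theta_k)\end{bmatrix}$ and frequencies $\theta_k=\theta^{-2(k-1)/d}$, $1\le k\le d/2$, for a base $\theta>1$. The stable rank of a nonzero matrix $\boldsymbol{X}$ is $\mathrm{srank}(\boldsymbol{X}):=\|\boldsymbol{X}\|_F^2/\|\boldsymbol{X}\|_2^2$, where $\|\cdot\|_F$ is the Frobenius norm and $\|\cdot\|_2$ the spectral norm. *)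

From HB Require Import structures.
From mathcomp Require Import all_boot all_order all_algebra.
From mathcomp Require Import all_classical all_reals all_analysis.
Set Implicit Arguments. Unset Strict Implicit. Unset Printing Implicit Defensive.
Import Order.TTheory GRing.Theory Num.Theory.
Import numFieldNormedType.Exports.
Local Open Scope classical_set_scope.
Local Open Scope ring_scope.

Section RoPE.
Variable R : realType.

(* RoPE frequency theta_{k+1} = base^(-2k/d), for 0-indexed k (so theta_k with k = 1..d/2). *)
Definition freq (base : R) (d k : nat) : R := base `^ (- ((2 * k)%:R / d%:R)).

(* The d x d block-diagonal rotation matrix R_j: index p belongs to block p./2
   (0-indexed; coordinates 2k-1,2k of the paper are 2k-2,2k-1 here). *)
Definition rotmx (base : R) (d j : nat) : 'M[R]_d :=
  \matrix_(p < d, q < d)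
    if p./2 == q./2 then
      let a := j%:R * freq base d p./2 in
      if ~~ odd p then (if ~~ odd q then cos a else - sin a)
      else (if ~~ odd q then sin a else cos a)
    else 0.

(* RoPE action: row i (0-indexed, i.e. x_{i+1}) is replaced by R_{i+1} x_{i+1}. *)
Definition rope (base : R) (n d : nat) (X : 'M[R]_(n, d)) : 'M[R]_(n, d) :=
  \matrix_(i < n, p < d) \sum_(q < d) rotmx base d i.+1 p q * X i q.

Definition vnorm (d : nat) (x : 'cV[R]_d) : R := Num.sqrt (\sum_(i < d) x i 0 ^+ 2).

Definition frobnorm (n d : nat) (X : 'M[R]_(n, d)) : R :=
  Num.sqrt (\sum_(i < n) \sum_(j < d) X i j ^+ 2).

Definition specnorm (n d : nat) (X : 'M[R]_(n, d)) : R :=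
  sup [set y | exists x : 'cV[R]_d, vnorm x = 1 /\ y = vnorm (X *m x)].

Definition srank (n d : nat) (X : 'M[R]_(n, d)) : R :=
  frobnorm X ^+ 2 / specnorm X ^+ 2.

Definition Xmat (u : nat -> R) (d : nat) (v : 'cV[R]_d) (n : nat) : 'M[R]_(n, d) :=
  \matrix_(i < n, p < d) (u i.+1 * v p 0).

(* alpha_{k+1} = sqrt(v_{2k+1}^2 + v_{2k+2}^2) (paper indexing), for 0-indexed k. *)
Definition alpha (d : nat) (v : 'cV[R]_d) (k : nat) : R :=
  Num.sqrt (\sum_(i < d | i./2 == k) v i 0 ^+ 2).

(* e^{i x} <> 1 *)
Definition expi_ne1 (x : R) : Prop := ~ (cos x = 1 /\ sin x = 0).

End RoPE.

From HB Require Import structures.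
From mathcomp Require Import all_boot all_order all_algebra.
From mathcomp Require Import all_classical all_reals all_analysis.
From mathcomp Require Import ring lra.
Import Order.TTheory GRing.Theory Num.Theory.
Import numFieldNormedType.Exports.
Local Open Scope classical_set_scope.
Local Open Scope ring_scope.
Set Implicit Arguments. Unset Strict Implicit. Unset Printing Implicit Defensive.

(* Both X_n = u v^T and R(X_n) have squared Frobenius norm
   S_n = sum_(j <= n) u_j^2, and so does the spectral norm of X_n, so the ratio
   of stable ranks is S_n / ||R(X_n)||_2^2. For a unit vector x,
   ||R(X_n) x||^2 = sum_j u_j^2 f_x(j)^2 with the trigonometric polynomial
   f_x(j) = sum_k (A_k cos (j theta_k) + B_k sin (j theta_k)), where
   A_k^2 + B_k^2 = alpha_k^2 beta_k^2 and beta_k is the norm of the k-th block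
   of x. Expanding the square produces u^2-weighted means of cos and sin of
   j (theta_k +- theta_l); by Abel summation, hypotheses (i)-(iii) make all of
   them vanish in the limit except the diagonal cos 0 terms, uniformly in x.
   Hence ||R(X_n)||_2^2 / S_n tends to max_x sum_k alpha_k^2 beta_k^2 / 2,
   which is max_k alpha_k^2 / 2. *)

Section Preliminaries.
Variable R : realType.

Lemma half_doubleS k : (k.*2.+1)./2 = k.
Proof. by rewrite /= uphalf_double. Qed.

Lemma big_ord_double (F : nat -> R) h :
  \sum_(i < h.*2) F i = \sum_(k < h) (F k.*2 + F k.*2.+1).
Proof.
elim: h => [|h IH]; first by rewrite !big_ord0.
by rewrite doubleS !big_ord_recr /= IH addrA.
Qed.

Lemma big_ord_if_eq n j (F : nat -> R) : (j < n)%N ->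
  \sum_(k < n) (if j == k then F k else 0) = F j.
Proof.
move=> jn; rewrite -big_mkcond (eq_bigl (fun k : 'I_n => (k : nat) == j)).
  by rewrite big_ord1_eq jn.
by move=> k; rewrite eq_sym.
Qed.

Lemma cvg_sum0 n (F : 'I_n -> nat -> R) :
  (forall k, F k @ \oo --> 0) -> (fun N => \sum_(k < n) F k N) @ \oo --> 0.
Proof.
move=> F0; have sum0 : \sum_(k < n) (0 : R) = 0 by rewrite big1.
by rewrite -[X in _ --> X]sum0; apply: cvg_big => //; exact: add_continuous.
Qed.

Lemma summation_by_parts (w g : nat -> R) n :
  \sum_(i < n.+1) w i.+1 * (g i.+1 - g i) =
  w n.+1 * g n.+1 - w 1%N * g 0%N - \sum_(1 <= j < n.+1) (w j.+1 - w j) * g j.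
Proof.
elim: n => [|n IH]; first by rewrite big_ord1 big_geq // subr0 mulrBr.
by rewrite [in RHS]big_nat_recr //= big_ord_recr /= IH mulrBr mulrBl; ring.
Qed.

Lemma norm_summation_by_parts_le (w g : nat -> R) K n :
  (forall j, (1 <= j)%N -> `|w j| <= K) -> (forall j, `|g j| <= 1) ->
  `|\sum_(i < n.+1) w i.+1 * (g i.+1 - g i)| <=
  2 * K + \sum_(1 <= j < n.+1) `|w j.+1 - w j|.
Proof.
move=> wK g1; rewrite summation_by_parts.
have wg_le i j : (1 <= i)%N -> `|w i * g j| <= K.
  by move=> i1; rewrite normrM -[K]mulr1 ler_pM // wK.
have wgn := wg_le n.+1 n.+1 isT; have wg0 := wg_le 1%N 0%N isT.
have var_le : `|\sum_(1 <= j < n.+1) (w j.+1 - w j) * g j| <=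
              \sum_(1 <= j < n.+1) `|w j.+1 - w j|.
  apply: le_trans (ler_norm_sum _ _ _) _; apply: ler_sum => j _.
  by rewrite normrM ler_piMr.
apply: le_trans (ler_normB _ _) _.
apply: le_trans (lerD (ler_normB _ _) (lexx _)) _.
lra.
Qed.

Lemma vnorm_sqr n (x : 'cV[R]_n) : vnorm x ^+ 2 = \sum_(i < n) x i 0 ^+ 2.
Proof. by rewrite sqr_sqrtr // sumr_ge0 // => i _; rewrite sqr_ge0. Qed.

Lemma frobnorm_sqr m n (X : 'M[R]_(m, n)) :
  frobnorm X ^+ 2 = \sum_(i < m) \sum_(j < n) X i j ^+ 2.
Proof.
by rewrite sqr_sqrtr // !sumr_ge0 // => i _; rewrite sumr_ge0 // => j _; rewrite sqr_ge0.
Qed.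

Lemma specnorm_sqr_bounds m n (M : 'M[R]_(m, n)) (x0 : 'cV[R]_n) b :
  vnorm x0 = 1 -> (forall x, vnorm x = 1 -> vnorm (M *m x) ^+ 2 <= b) ->
  vnorm (M *m x0) ^+ 2 <= specnorm M ^+ 2 <= b.
Proof.
move=> x01 Mb.
pose E := [set y | exists x : 'cV[R]_n, vnorm x = 1 /\ y = vnorm (M *m x)].
have -> : specnorm M = sup E by [].
have b0 : 0 <= b := le_trans (sqr_ge0 _) (Mb _ x01).
have ubE : ubound E (Num.sqrt b).
  move=> _ [x [x1 ->]]; rewrite -[vnorm _]ger0_norm ?sqrtr_ge0 //.
  by rewrite -sqrtr_sqr ler_sqrt // Mb.
have Ex0 : E (vnorm (M *m x0)) by exists x0.
have sup_le : sup E <= Num.sqrt b by apply: ge_sup => //; exists (vnorm (M *m x0)).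
have le_sup : vnorm (M *m x0) <= sup E.
  by apply: sup_upper_bound => //; split; [exists (vnorm (M *m x0)) | exists (Num.sqrt b)].
have Mx0_ge0 : 0 <= vnorm (M *m x0) := sqrtr_ge0 _.
have := sqr_sqrtr b0; have := sqrtr_ge0 b => ? ?.
apply/andP; split; nra.
Qed.

Lemma dot_sqr_le1 n (x y : 'cV[R]_n) : vnorm x = 1 -> vnorm y = 1 ->
  (\sum_(p < n) x p 0 * y p 0) ^+ 2 <= 1.
Proof.
move=> x1 y1.
have half_sum : \sum_(p < n) (x p 0 ^+ 2 + y p 0 ^+ 2) / 2 = 1.
  by rewrite -mulr_suml big_split /= -!vnorm_sqr x1 y1 expr1n; field.
have le1 : \sum_(p < n) x p 0 * y p 0 <= 1.
  rewrite -half_sum; apply: ler_sum => p _.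
  by have := sqr_ge0 (x p 0 - y p 0); rewrite sqrrB; lra.
have ge_m1 : - (\sum_(p < n) x p 0 * y p 0) <= 1.
  rewrite -half_sum -sumrN; apply: ler_sum => p _.
  by have := sqr_ge0 (x p 0 + y p 0); rewrite sqrrD; lra.
nra.
Qed.

(* Coordinates indexed by [nat] (0 out of range), so that the pair (2k, 2k+1)
   forming the k-th RoPE block can be addressed arithmetically. *)
Definition coord n (x : 'cV[R]_n) (p : nat) : R :=
  if insub p is Some q then x q 0 else 0.

Lemma coordE n (x : 'cV[R]_n) (q : 'I_n) : coord x q = x q 0.
Proof. by rewrite /coord valK. Qed.

Lemma coord_col n (F : nat -> R) p : (p < n)%N -> coord (\col_(q < n) F q) p = F p.
Proof. by move=> pn; rewrite /coord insubT /= mxE. Qed.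

Definition cosw (f : R) (j : nat) := cos (j%:R * f).
Definition sinw (f : R) (j : nat) := sin (j%:R * f).

Definition trigpoly h (A B th : nat -> R) (j : nat) :=
  \sum_(k < h) (A k * cosw (th k) j + B k * sinw (th k) j).

Lemma cosw_sinw_product (Ak Bk Al Bl fk fl : R) j :
  (Ak * cosw fk j + Bk * sinw fk j) * (Al * cosw fl j + Bl * sinw fl j) =
  (Ak * Al + Bk * Bl) / 2 * cosw (fk - fl) j + (Ak * Al - Bk * Bl) / 2 * cosw (fk + fl) j
  + (Ak * Bl + Bk * Al) / 2 * sinw (fk + fl) j + (Bk * Al - Ak * Bl) / 2 * sinw (fk - fl) j.
Proof. by rewrite /cosw /sinw !(mulrBr j%:R) !(mulrDr j%:R) cosB cosD sinD sinB; field. Qed.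

Lemma half_sin_neq0 (f : R) : expi_ne1 f -> sin (f / 2) != 0.
Proof.
move=> f_ne1; apply/negP => /eqP sin0; apply: f_ne1.
have -> : f = f / 2 + f / 2 by field.
rewrite cosD sinD sin0; split; last by ring.
by have := cos2Dsin2 (f / 2); rewrite sin0 => ?; nra.
Qed.

Lemma norm_half_dot2_le1 (a b a' b' : R) :
  `|a| <= 1 -> `|b| <= 1 -> `|a'| <= 1 -> `|b'| <= 1 -> `|(a * b + a' * b') / 2| <= 1.
Proof.
move=> ? ? ? ?; rewrite normf_div normr_nat ler_pdivrMr // mul1r.
apply: le_trans (ler_normD _ _) _; rewrite !normrM.
have := normr_ge0 a; have := normr_ge0 a'; have := normr_ge0 b; have := normr_ge0 b'.
nra.
Qed.

Lemma norm_lincomb4_le (a1 a2 a3 a4 w1 w2 w3 w4 z : R) :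
  `|a1| <= 1 -> `|a2| <= 1 -> `|a3| <= 1 -> `|a4| <= 1 ->
  `|a1 * w1 + a2 * w2 + a3 * w3 + a4 * w4 - z * a1|
  <= `|w1 - z| + `|w2| + `|w3| + `|w4|.
Proof.
move=> ? ? ? ?.
have le_w (a w : R) : `|a| <= 1 -> `|a * w| <= `|w| by move=> ?; rewrite normrM ler_piMl.
have -> : a1 * w1 + a2 * w2 + a3 * w3 + a4 * w4 - z * a1 =
          a1 * (w1 - z) + a2 * w2 + a3 * w3 + a4 * w4 by ring.
do 3 (apply: le_trans (ler_normD _ _) _; apply: lerD; last by apply: le_w).
exact: le_w.
Qed.

End Preliminaries.

Section WeightedMeans.
Variable R : realType.
Variables (u : nat -> R) (c C : R).
Hypothesis c_gt0 : 0 < c.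
Hypothesis u_bounds : forall j, (1 <= j)%N -> c <= `|u j| <= C.

Definition sqsum N := \sum_(i < N) u i.+1 ^+ 2.

Definition wmean (g : nat -> R) N := (\sum_(i < N) u i.+1 ^+ 2 * g i.+1) / sqsum N.

Definition sqvar N := (\sum_(1 <= j < N) `|u j.+1 ^+ 2 - u j ^+ 2|) / N%:R.

Hypothesis sqvar_cvg0 : sqvar @ \oo --> 0.

Lemma wmeanD g1 g2 N : wmean (fun j => g1 j + g2 j) N = wmean g1 N + wmean g2 N.
Proof.
by rewrite /wmean -mulrDl -big_split /=; congr (_ / _); apply: eq_bigr => i _; rewrite mulrDr.
Qed.

Lemma wmeanZ a g N : wmean (fun j => a * g j) N = a * wmean g N.
Proof. by rewrite /wmean mulrA mulr_sumr; under eq_bigr do rewrite mulrCA. Qed.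

Lemma wmean_sum (I : Type) (r : seq I) (F : I -> nat -> R) N :
  wmean (fun j => \sum_(k <- r) F k j) N = \sum_(k <- r) wmean (F k) N.
Proof.
rewrite /wmean -mulr_suml exchange_big /=; congr (_ / _).
by apply: eq_bigr => i _; rewrite mulr_sumr.
Qed.

Lemma sqsum_ge N : N%:R * c ^+ 2 <= sqsum N.
Proof.
rewrite /sqsum -[N in N%:R]card_ord mulr_natl -sumr_const; apply: ler_sum => i _.
have /andP[cu _] := u_bounds (ltn0Sn i).
rewrite -(real_normK (num_real (u i.+1))) !expr2.
by apply: ler_pM => //; exact: ltW.
Qed.

Lemma sqsum_gt0 N : 0 < sqsum N.+1.
Proof. by apply: lt_le_trans (sqsum_ge _); rewrite mulr_gt0 ?exprn_gt0. Qed.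

Lemma wmean_cst a N : wmean (fun=> a) N.+1 = a.
Proof. by rewrite /wmean -mulr_suml mulrAC divff ?mul1r // gt_eqF ?sqsum_gt0. Qed.

Lemma wmean_cosw0 N : wmean (cosw 0) N.+1 = 1.
Proof.
rewrite -(wmean_cst 1 N) /wmean; congr (_ / _).
by apply: eq_bigr => i _; rewrite /cosw mulr0 cos0.
Qed.

Lemma wmean_cosw0_cvg : wmean (cosw 0) @ \oo --> (1 : R).
Proof.
rewrite -cvg_shiftS.
suff -> : [sequence wmean (cosw 0) n.+1]_n = fun=> 1 by exact: cvg_cst.
by rewrite funeqE => N /=; rewrite wmean_cosw0.
Qed.

Lemma wmean_sinw0 N : wmean (sinw 0) N = 0.
Proof. by rewrite /wmean big1 ?mul0r // => i _; rewrite /sinw mulr0 sin0 mulr0. Qed.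

Lemma wmean_telescope_le (g F : nat -> R) t n :
  (forall j, `|g j| <= 1) -> t != 0 -> (forall j, t * F j.+1 = g j.+1 - g j) ->
  `|wmean F n.+1| <= (2 * C ^+ 2 / n.+1%:R + sqvar n.+1) / (`|t| * c ^+ 2).
Proof.
move=> g1 t0 tF.
set V := \sum_(1 <= j < n.+1) `|u j.+1 ^+ 2 - u j ^+ 2|.
have abel : `|t| * `|\sum_(i < n.+1) u i.+1 ^+ 2 * F i.+1| <= 2 * C ^+ 2 + V.
  rewrite -normrM mulr_sumr.
  under eq_bigr do rewrite mulrCA tF.
  apply: (norm_summation_by_parts_le (w := fun j => u j ^+ 2)) => // j j1.
  have /andP[_ uC] := u_bounds j1.
  by rewrite normrX; have := normr_ge0 (u j); nra.
have S_ge := sqsum_ge n.+1; have S_gt0 := sqsum_gt0 n.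
have tc_gt0 : 0 < `|t| * (n.+1%:R * c ^+ 2) by rewrite !mulr_gt0 ?normr_gt0 ?exprn_gt0.
have -> : (2 * C ^+ 2 / n.+1%:R + sqvar n.+1) / (`|t| * c ^+ 2) =
          (2 * C ^+ 2 + V) / (`|t| * (n.+1%:R * c ^+ 2)).
  rewrite /sqvar -/V; field.
  by rewrite (gt_eqF c_gt0) nat1r pnatr_eq0 normr_eq0 t0.
rewrite /wmean /= normf_div (gtr0_norm S_gt0) ler_pdivrMr // mulrAC ler_pdivlMr //.
have := ler_wpM2l (normr_ge0 t) S_ge.
have := normr_ge0 (\sum_(i < n.+1) u i.+1 ^+ 2 * F i.+1); have := normr_ge0 t.
nra.
Qed.

Lemma wmean_telescope_cvg0 (g F : nat -> R) t :
  (forall j, `|g j| <= 1) -> t != 0 -> (forall j, t * F j.+1 = g j.+1 - g j) ->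
  wmean F @ \oo --> 0.
Proof.
move=> g1 t0 tF; rewrite -cvg_shiftS /=.
pose e n := (2 * C ^+ 2 / n.+1%:R + sqvar n.+1) / (`|t| * c ^+ 2).
have e_cvg0 : e @ \oo --> 0.
  have var_cvg0 := sqvar_cvg0; rewrite -cvg_shiftS /= in var_cvg0.
  rewrite /e -(mul0r (`|t| * c ^+ 2)^-1); apply: cvgM; last exact: cvg_cst.
  rewrite -(addr0 0); apply: cvgD => //.
  by rewrite -(mulr0 (2 * C ^+ 2)); apply: cvgM; [exact: cvg_cst | exact: cvg_harmonic].
apply: (squeeze_cvgr (f := fun n => - e n) (h := e)) => //.
  by apply: nearW => n; rewrite -ler_norml; exact: wmean_telescope_le.
by rewrite -oppr0; exact: cvgN.
Qed.

Lemma wmean_cosw_sinw_cvg0 f : expi_ne1 f ->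
  wmean (cosw f) @ \oo --> 0 /\ wmean (sinw f) @ \oo --> 0.
Proof.
move=> f_ne1; have s0 := half_sin_neq0 f_ne1.
(* 2 sin (f/2) cos (j f) and 2 sin (f/2) sin (j f) telescope through the half-integer angles *)
have shift j : j%:R * f + f / 2 = j.+1%:R * f - f / 2.
  by rewrite -[j.+1%:R]natr1 mulrDl mul1r; field.
split.
  apply: (wmean_telescope_cvg0 (g := fun j => sin (j%:R * f + f / 2)) (t := 2 * sin (f / 2))).
  - by move=> j; exact: sin_max.
  - by rewrite mulf_neq0 // pnatr_eq0.
  - by move=> j; rewrite (shift j) sinD sinB /cosw; ring.
apply: (wmean_telescope_cvg0 (g := fun j => cos (j%:R * f + f / 2)) (t := - (2 * sin (f / 2)))).
- by move=> j; exact: cos_max.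
- by rewrite oppr_eq0 mulf_neq0 // pnatr_eq0.
- by move=> j; rewrite (shift j) cosD cosB /sinw; ring.
Qed.

Definition osc_err h (th : nat -> R) N := \sum_(k < h) \sum_(l < h)
  (`|wmean (cosw (th k - th l)) N - (k == l)%:R| + `|wmean (cosw (th k + th l)) N|
   + `|wmean (sinw (th k + th l)) N| + `|wmean (sinw (th k - th l)) N|).

Lemma wmean_trigpoly_sqr h (A B th : nat -> R) N :
  (forall k, (k < h)%N -> `|A k| <= 1 /\ `|B k| <= 1) ->
  `|wmean (fun j => trigpoly h A B th j ^+ 2) N - \sum_(k < h) (A k ^+ 2 + B k ^+ 2) / 2|
  <= osc_err h th N.
Proof.
move=> AB1.
have -> : (fun j => trigpoly h A B th j ^+ 2) = fun j => \sum_(k < h) \sum_(l < h)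
    (A k * cosw (th k) j + B k * sinw (th k) j) * (A l * cosw (th l) j + B l * sinw (th l) j).
  by apply: funext => j; rewrite expr2 mulr_suml; apply: eq_bigr => k _; rewrite mulr_sumr.
have diag : \sum_(k < h) (A k ^+ 2 + B k ^+ 2) / 2 =
    \sum_(k < h) \sum_(l < h) (k == l)%:R * ((A k * A l + B k * B l) / 2).
  apply: eq_bigr => k _; rewrite (bigD1 k) //= eqxx mul1r big1 ?addr0 ?expr2 //.
  by move=> l /negbTE; rewrite eq_sym => ->; rewrite mul0r.
rewrite wmean_sum diag -sumrB; apply: le_trans (ler_norm_sum _ _ _) _.
apply: ler_sum => k _; rewrite wmean_sum -sumrB.
apply: le_trans (ler_norm_sum _ _ _) _; apply: ler_sum => l _.
under eq_fun do rewrite cosw_sinw_product.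
rewrite !wmeanD !wmeanZ.
have [Ak Bk] := AB1 k (ltn_ord k); have [Al Bl] := AB1 l (ltn_ord l).
by apply: norm_lincomb4_le; rewrite -?mulNr norm_half_dot2_le1 ?normrN.
Qed.

Lemma osc_err_cvg0 h (th : nat -> R) :
  (forall k, (k < h)%N -> expi_ne1 (2 * th k)) ->
  (forall k l, (k < h)%N -> (l < h)%N -> k <> l ->
     expi_ne1 (th k + th l) /\ expi_ne1 (th k - th l)) ->
  osc_err h th @ \oo --> 0.
Proof.
move=> nr_diag nr_off.
have W0 f : expi_ne1 f ->
    `|wmean (cosw f) N| @[N --> \oo] --> 0 /\ `|wmean (sinw f) N| @[N --> \oo] --> 0.
  by move=> /wmean_cosw_sinw_cvg0[? ?]; split; apply/norm_cvg0P.
apply: cvg_sum0 => k; apply: cvg_sum0 => l /=.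
have [<-|kl] := eqVneq k l.
  have -> : th k + th k = 2 * th k by ring.
  rewrite subrr mulr1n; under eq_fun do rewrite wmean_sinw0 normr0 addr0.
  have cos0 : `|wmean (cosw 0) N - 1| @[N --> \oo] --> 0.
    apply/norm_cvg0P; rewrite -[X in _ --> X](subrr (1 : R)).
    exact: cvgB wmean_cosw0_cvg (cvg_cst _).
  have [cos2 sin2] := W0 _ (nr_diag k (ltn_ord k)).
  by apply: cvg_trans (cvgD (cvgD cos0 cos2) sin2) _; rewrite !addr0.
have kl' : (k : nat) <> l := fun e => negP kl (introT eqP (val_inj e)).
have [/W0[c1 s1] /W0[c2 s2]] := nr_off k l (ltn_ord k) (ltn_ord l) kl'.
rewrite mulr0n; under eq_fun do rewrite subr0.
by apply: cvg_trans (cvgD (cvgD (cvgD c2 c1) s1) s2) _; rewrite !addr0.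
Qed.

End WeightedMeans.

Section RankOne.
Variables (R : realType) (d : nat) (u : nat -> R) (v : 'cV[R]_d).

Lemma frobnorm_Xmat N : frobnorm (Xmat u v N) ^+ 2 = sqsum u N * vnorm v ^+ 2.
Proof.
rewrite frobnorm_sqr vnorm_sqr /sqsum mulr_suml; apply: eq_bigr => i _.
by under eq_bigr do rewrite mxE exprMn; rewrite -mulr_sumr.
Qed.

Lemma vnorm_Xmat_mul N (x : 'cV[R]_d) :
  vnorm (Xmat u v N *m x) ^+ 2 = sqsum u N * (\sum_(p < d) v p 0 * x p 0) ^+ 2.
Proof.
rewrite vnorm_sqr /sqsum mulr_suml; apply: eq_bigr => i _; rewrite mxE.
by under eq_bigr do rewrite mxE -mulrA; rewrite -mulr_sumr exprMn.
Qed.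

Lemma specnorm_Xmat N : vnorm v = 1 -> specnorm (Xmat u v N) ^+ 2 = sqsum u N.
Proof.
move=> v1.
have vv1 : \sum_(p < d) v p 0 * v p 0 = 1.
  by rewrite -(expr1n _ 2) -[in RHS]v1 vnorm_sqr; apply: eq_bigr => p _; rewrite expr2.
have Xx_le x : vnorm x = 1 -> vnorm (Xmat u v N *m x) ^+ 2 <= sqsum u N.
  move=> x1; rewrite vnorm_Xmat_mul ler_piMr ?dot_sqr_le1 //.
  by rewrite sumr_ge0 // => i _; rewrite sqr_ge0.
have /andP[lo hi] := specnorm_sqr_bounds v1 Xx_le.
by apply/le_anti; rewrite hi -[X in X <= _]mulr1 -(expr1n _ 2) -vv1 -vnorm_Xmat_mul.
Qed.

End RankOne.

Section RoPE.
Variables (R : realType) (h : nat) (base : R) (v : 'cV[R]_(h.*2)).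
Local Notation th := (freq base h.*2).

Lemma big_ord_double_coord (x : 'cV[R]_(h.*2)) (G : nat -> R -> R) :
  \sum_(p < h.*2) G p (x p 0) =
  \sum_(k < h) (G k.*2 (coord x k.*2) + G k.*2.+1 (coord x k.*2.+1)).
Proof.
rewrite -(big_ord_double (fun p => G p (coord x p))).
by apply: eq_bigr => p _; rewrite coordE.
Qed.

Definition blocksq (x : 'cV[R]_(h.*2)) k := coord x k.*2 ^+ 2 + coord x k.*2.+1 ^+ 2.

Lemma vnorm_sqr_blocks x : vnorm x ^+ 2 = \sum_(k < h) blocksq x k.
Proof. by rewrite vnorm_sqr (big_ord_double_coord x (fun _ y => y ^+ 2)). Qed.

Lemma blocksq_ge0 x k : 0 <= blocksq x k.
Proof. by rewrite addr_ge0 ?sqr_ge0. Qed.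

Lemma blocksq_le x (k : 'I_h) : blocksq x k <= vnorm x ^+ 2.
Proof.
rewrite vnorm_sqr_blocks (bigD1 k) //= lerDl.
by apply: sumr_ge0 => i _; exact: blocksq_ge0.
Qed.

Lemma alpha_sqr x k : (k < h)%N -> alpha x k ^+ 2 = blocksq x k.
Proof.
move=> kh; rewrite sqr_sqrtr ?sumr_ge0 // => [|i _]; last exact: sqr_ge0.
rewrite big_mkcond /=.
rewrite (big_ord_double_coord x (fun p y => if p./2 == k then y ^+ 2 else 0)).
rewrite -(big_ord_if_eq (blocksq x) kh); apply: eq_bigr => k' _.
by rewrite doubleK half_doubleS eq_sym; case: eqP; rewrite ?addr0.
Qed.

Definition rotv (j p : nat) : R :=
  let k := p./2 in let a := j%:R * th k in
  if ~~ odd p then coord v k.*2 * cos a - coord v k.*2.+1 * sin a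
  else coord v k.*2 * sin a + coord v k.*2.+1 * cos a.

Lemma rotmx_mulv j (p : 'I_(h.*2)) :
  \sum_(q < h.*2) rotmx base h.*2 j p q * v q 0 = rotv j p.
Proof.
pose F k := let a := j%:R * th p./2 in
  if ~~ odd p then coord v k.*2 * cos a - coord v k.*2.+1 * sin a
  else coord v k.*2 * sin a + coord v k.*2.+1 * cos a.
have ph : (p./2 < h)%N by rewrite ltn_half_double.
rewrite -[RHS]/(F p./2) -(big_ord_if_eq F ph).
under eq_bigr do rewrite mxE.
rewrite (big_ord_double_coord v (fun q y => (if p./2 == q./2 then
      let a := j%:R * th p./2 in
      if ~~ odd p then (if ~~ odd q then cos a else - sin a)
      else (if ~~ odd q then sin a else cos a)
    else 0) * y)).
apply: eq_bigr => k _; rewrite /F doubleK half_doubleS /= odd_double /=.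
by case: eqP => _; case: (odd p); rewrite /= ?mul0r ?addr0 //; ring.
Qed.

Lemma rotv_sqr j : \sum_(p < h.*2) rotv j p ^+ 2 = vnorm v ^+ 2.
Proof.
rewrite (big_ord_double (fun p => rotv j p ^+ 2)) vnorm_sqr_blocks.
apply: eq_bigr => k _; rewrite /rotv doubleK half_doubleS /= odd_double /=.
set a := j%:R * th k.
have := cos2Dsin2 a; rewrite /blocksq => trig1.
by rewrite -[RHS]mulr1 -trig1; ring.
Qed.

Lemma rope_Xmat_entry (u : nat -> R) N (i : 'I_N) (p : 'I_(h.*2)) :
  rope base (Xmat u v N) i p = u i.+1 * rotv i.+1 p.
Proof.
rewrite mxE -rotmx_mulv mulr_sumr; apply: eq_bigr => q _.
by rewrite [Xmat _ _ _ _ _]mxE mulrCA.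
Qed.

Lemma frobnorm_rope_Xmat (u : nat -> R) N :
  frobnorm (rope base (Xmat u v N)) ^+ 2 = sqsum u N * vnorm v ^+ 2.
Proof.
rewrite frobnorm_sqr /sqsum mulr_suml; apply: eq_bigr => i _.
by under eq_bigr do rewrite rope_Xmat_entry exprMn; rewrite -mulr_sumr rotv_sqr.
Qed.

Definition coefA (x : 'cV[R]_(h.*2)) k :=
  coord x k.*2 * coord v k.*2 + coord x k.*2.+1 * coord v k.*2.+1.
Definition coefB (x : 'cV[R]_(h.*2)) k :=
  coord x k.*2.+1 * coord v k.*2 - coord x k.*2 * coord v k.*2.+1.

Lemma coefA_coefB_sqr x k : coefA x k ^+ 2 + coefB x k ^+ 2 = blocksq v k * blocksq x k.
Proof. by rewrite /coefA /coefB /blocksq; ring. Qed.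

Lemma coefA_coefB_le1 x (k : 'I_h) : vnorm v = 1 -> vnorm x = 1 ->
  `|coefA x k| <= 1 /\ `|coefB x k| <= 1.
Proof.
move=> v1 x1.
have AB_le1 : coefA x k ^+ 2 + coefB x k ^+ 2 <= 1.
  have := blocksq_le v k; have := blocksq_le x k; rewrite v1 x1 expr1n => bx bv.
  rewrite coefA_coefB_sqr -[1](mulr1 1); apply: ler_pM => //; exact: blocksq_ge0.
have sq_le1 (a : R) : a ^+ 2 <= 1 -> `|a| <= 1.
  by move=> a1; rewrite -(expr_le1 (isT : (0 < 2)%N)) // real_normK ?num_real.
by split; apply: sq_le1; have := sqr_ge0 (coefA x k); have := sqr_ge0 (coefB x k); lra.
Qed.

Lemma rope_Xmat_mul_entry (u : nat -> R) N (x : 'cV[R]_(h.*2)) (i : 'I_N) :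
  (rope base (Xmat u v N) *m x) i 0 = u i.+1 * trigpoly h (coefA x) (coefB x) th i.+1.
Proof.
rewrite mxE; under eq_bigr do rewrite rope_Xmat_entry -mulrA.
rewrite -mulr_sumr (big_ord_double_coord x (fun p y => rotv i.+1 p * y)).
congr (_ * _); apply: eq_bigr => k _.
by rewrite /rotv /cosw /sinw /coefA /coefB doubleK half_doubleS /= odd_double /=; ring.
Qed.

Definition rope_form (x : 'cV[R]_(h.*2)) := \sum_(k < h) blocksq v k * blocksq x k / 2.

Lemma rope_form_approx (u : nat -> R) N x : vnorm v = 1 -> vnorm x = 1 ->
  `|vnorm (rope base (Xmat u v N) *m x) ^+ 2 / sqsum u N - rope_form x|
  <= osc_err u h th N.
Proof.
move=> v1 x1.
have -> : vnorm (rope base (Xmat u v N) *m x) ^+ 2 / sqsum u N =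
          wmean u (fun j => trigpoly h (coefA x) (coefB x) th j ^+ 2) N.
  by rewrite vnorm_sqr; congr (_ / _); apply: eq_bigr => i _;
     rewrite rope_Xmat_mul_entry exprMn.
rewrite /rope_form; under eq_bigr do rewrite -coefA_coefB_sqr.
apply: wmean_trigpoly_sqr => k kh.
exact: (coefA_coefB_le1 (Ordinal kh)).
Qed.

Definition alpha2max := \big[Num.max/0]_(k < h) alpha v k ^+ 2.

Lemma alpha2max_le1 : vnorm v = 1 -> alpha2max <= 1.
Proof.
move=> v1; apply: bigmax_le => // k _.
by rewrite alpha_sqr // -(expr1n _ 2) -v1 blocksq_le.
Qed.

Lemma alpha2max_ge : vnorm v = 1 -> 1 <= h%:R * alpha2max.
Proof.
move=> v1; have sum1 : \sum_(k < h) blocksq v k = 1 by rewrite -vnorm_sqr_blocks v1 expr1n.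
rewrite -[X in X <= _]sum1 -[h in h%:R]card_ord mulr_natl -sumr_const.
apply: ler_sum => k _.
by rewrite -alpha_sqr // le_bigmax.
Qed.

Lemma rope_form_le x : vnorm x = 1 -> rope_form x <= alpha2max / 2.
Proof.
move=> x1; have sum1 : \sum_(k < h) blocksq x k = 1 by rewrite -vnorm_sqr_blocks x1 expr1n.
rewrite -[alpha2max]mulr1 -[X in alpha2max * X]sum1 mulr_sumr mulr_suml; apply: ler_sum => k _.
rewrite ler_wpM2r // ler_wpM2r ?blocksq_ge0 //.
by rewrite -alpha_sqr // le_bigmax.
Qed.

Lemma rope_form_max : (0 < h)%N -> exists2 x, vnorm x = 1 & rope_form x = alpha2max / 2.
Proof.
move=> h_gt0.
have [ks _ ks_max] := eq_bigmax (Ordinal h_gt0) xpredT (fun k : 'I_h => alpha v k ^+ 2)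
  isT (fun k _ => sqr_ge0 _).
(* the first basis vector of the block on which the maximum is attained *)
pose x := \col_(q < h.*2) ((q : nat) == ks.*2)%:R : 'cV[R]_(h.*2).
have x_block (k : 'I_h) : blocksq x k = ((k : nat) == ks)%:R.
  rewrite /blocksq /x !(coord_col (fun q : nat => (q == ks.*2)%:R))
    ?ltn_double ?ltn_Sdouble ?ltn_ord // (can_eq doubleK).
  have -> : (k.*2.+1 == ks.*2) = false.
    by apply/eqP => /(congr1 odd); rewrite /= !odd_double.
  by case: eqP => _; rewrite ?expr1n expr0n /= addr0.
exists x.
  rewrite /vnorm -(vnorm_sqr x) vnorm_sqr_blocks (bigD1 ks) //= x_block eqxx.
  by rewrite big1 ?addr0 ?sqrtr1 // => k /negbTE kks; rewrite x_block val_eqE kks.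
rewrite /rope_form (bigD1 ks) //= x_block eqxx mulr1 big1 ?addr0 => [|k /negbTE kks].
  by rewrite -alpha_sqr // /alpha2max ks_max.
by rewrite x_block val_eqE kks mulr0 mul0r.
Qed.

Lemma specnorm_rope_approx (u : nat -> R) N : (0 < h)%N -> vnorm v = 1 -> 0 < sqsum u N ->
  `|specnorm (rope base (Xmat u v N)) ^+ 2 / sqsum u N - alpha2max / 2|
  <= osc_err u h th N.
Proof.
move=> h_gt0 v1 S_gt0.
set M := rope base (Xmat u v N); set S := sqsum u N; set D := osc_err u h th N.
have approx x : vnorm x = 1 ->
    (rope_form x - D) * S <= vnorm (M *m x) ^+ 2 <= (rope_form x + D) * S.
  move=> x1; have := rope_form_approx u N v1 x1; rewrite -/M -/S -/D ler_norml.
  move=> /andP[lo hi]; rewrite -[vnorm _ ^+ 2](divfK (lt0r_neq0 S_gt0)) !ler_pM2r //.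
  by apply/andP; split; lra.
have Mx_le x : vnorm x = 1 -> vnorm (M *m x) ^+ 2 <= (alpha2max / 2 + D) * S.
  move=> x1; have /andP[_ Mx] := approx x x1; apply: le_trans Mx _.
  by rewrite ler_pM2r // lerD2r rope_form_le.
have [x0 x01 form_x0] := rope_form_max h_gt0.
have /andP[lo hi] := specnorm_sqr_bounds x01 Mx_le.
have /andP[lo0 _] := approx x0 x01; rewrite form_x0 in lo0.
have lo' := le_trans lo0 lo.
rewrite -ler_pdivlMr // in lo'; rewrite -ler_pdivrMr // in hi.
by rewrite ler_norml; apply/andP; split; lra.
Qed.

Lemma srank_rope_Xmat_ratio (u : nat -> R) N : vnorm v = 1 -> 0 < sqsum u N ->
  srank (rope base (Xmat u v N)) / srank (Xmat u v N) =
  (specnorm (rope base (Xmat u v N)) ^+ 2 / sqsum u N)^-1.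
Proof.
move=> v1 S_gt0.
rewrite /srank frobnorm_rope_Xmat frobnorm_Xmat specnorm_Xmat // v1 expr1n mulr1.
by rewrite divff ?lt0r_neq0 // divr1 invf_div.
Qed.

Lemma specnorm_rope_cvg (u : nat -> R) (c C : R) :
  (0 < h)%N -> vnorm v = 1 -> 0 < c -> (forall j, (1 <= j)%N -> c <= `|u j| <= C) ->
  sqvar u @ \oo --> 0 ->
  (forall k, (k < h)%N -> expi_ne1 (2 * th k)) ->
  (forall k l, (k < h)%N -> (l < h)%N -> k <> l ->
     expi_ne1 (th k + th l) /\ expi_ne1 (th k - th l)) ->
  (fun N => specnorm (rope base (Xmat u v N)) ^+ 2 / sqsum u N) @ \oo --> alpha2max / 2.
Proof.
move=> h_gt0 v1 c_gt0 u_bd var0 nr_diag nr_off.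
have err0 := osc_err_cvg0 c_gt0 u_bd var0 nr_diag nr_off.
rewrite -cvg_shiftS; rewrite -cvg_shiftS in err0.
apply: (squeeze_cvgr (f := fun N => alpha2max / 2 - osc_err u h th N.+1)
                     (h := fun N => alpha2max / 2 + osc_err u h th N.+1)).
- apply: nearW => N /=.
  have := specnorm_rope_approx h_gt0 v1 (sqsum_gt0 c_gt0 u_bd N).
  by rewrite ler_norml => /andP[? ?]; apply/andP; split; lra.
- by rewrite -[X in _ --> X]subr0; apply: cvgB => //; exact: cvg_cst.
- by rewrite -[X in _ --> X]addr0; apply: cvgD => //; exact: cvg_cst.
Qed.

End RoPE.

Theorem theorem1 (R : realType) (d : nat) (base : R) (u : nat -> R) (v : 'cV[R]_d)
  (hd : (2 <= d)%N) (hev : ~~ odd d) (hbase : 1 < base)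
  (hv : vnorm v = 1)
  (hbd : exists c C : R, 0 < c /\ c <= C /\
           forall j : nat, (1 <= j)%N -> c <= `|u j| <= C)
  (hvar : (fun n : nat => (\sum_(1 <= j < n) `|u j.+1 ^+ 2 - u j ^+ 2|) / n%:R)
            @ \oo --> (0 : R))
  (hnr1 : forall k : nat, (k < d./2)%N -> expi_ne1 (2 * freq base d k))
  (hnr2 : forall k l : nat, (k < d./2)%N -> (l < d./2)%N -> k <> l ->
            expi_ne1 (freq base d k + freq base d l) /\
            expi_ne1 (freq base d k - freq base d l)) :
  let L := 2 / (\big[Num.max/0]_(k < d./2) alpha v k ^+ 2) in
  (fun n : nat => srank (rope base (Xmat u v n)) / srank (Xmat u v n)) @ \oo --> L
  /\ 2 <= L <= d%:R.
Proof.
have [c [C [c_gt0 [_ u_bd]]]] := hbd.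
have [h dh] : exists h, d = h.*2.
  by exists d./2; rewrite -[LHS]odd_double_half (negbTE hev).
subst d.
rewrite doubleK in hnr1 hnr2 * => L; rewrite {}/L -/(alpha2max v).
have h_gt0 : (0 < h)%N by rewrite -(leq_double 1).
have a_le1 := alpha2max_le1 hv; have a_ge := alpha2max_ge hv.
have a_gt0 : 0 < alpha2max v.
  by have := lt_le_trans ltr01 a_ge; rewrite pmulr_rgt0 ?ltr0n.
split.
  rewrite -cvg_shiftS.
  under eq_fun do rewrite srank_rope_Xmat_ratio ?(sqsum_gt0 c_gt0 u_bd) //.
  rewrite -invf_div; apply: cvgV; first by rewrite lt0r_neq0 ?divr_gt0.
  by move: (specnorm_rope_cvg h_gt0 hv c_gt0 u_bd hvar hnr1 hnr2); rewrite -cvg_shiftS.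
rewrite -addnn natrD; apply/andP; split.
  by rewrite ler_pdivlMr //; lra.
by rewrite ler_pdivrMr //; lra.
Qed.
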